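(* Let $A$ be a finite set with $|A|\ge 2$ and $n\ge 2$. If $X\subset\mathrm{Sym}(A^n)$ is a set of $n$ instructions which generates $\mathrm{Sym}(A^n)$, then $X$ contains no unary instruction.
   Context: Any $f\in\mathrm{Sym}(A^n)$ is written $f(x)=(f_1(x),\ldots,f_n(x))$ with coordinate functions $f_i:A^n\to A$; the $i$-th coordinate function is trivial if $f_i(x)=x_i$ for all $x$. An instruction is a permutation of $A^n$ with at most one nontrivial coordinate function (the identity counts as an instruction). A unary instruction is an instruction all of whose coordinate functions depend on at most one variable, i.e. it has the form $x\mapsto(x_1,\ldots,x_{j-1},h(x_j),x_{j+1},\ldots,x_n)$ with $h\in\mathrm{Sym}(A)$. *)

From mathcomp Require Import all_boot all_fingroup.
Set Implicit Arguments. Unset Strict Implicit. Unset Printing Implicit Defensive.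

(* A^n is represented as {ffun 'I_n -> A}; Sym(A^n) is {perm {ffun 'I_n -> A}}. *)
Notation word A n := {ffun 'I_n -> A}.

Definition coord_trivial (A : finType) (n : nat) (f : {perm word A n}) (i : 'I_n) :=
  forall x : word A n, f x i = x i.

Definition instruction (A : finType) (n : nat) (f : {perm word A n}) :=
  exists j : 'I_n, forall i : 'I_n, i != j -> coord_trivial f i.

Definition unary_instruction (A : finType) (n : nat) (f : {perm word A n}) :=
  exists (j : 'I_n) (h : {perm A}),
    forall x : word A n, f x = [ffun i => if i == j then h (x j) else x i].

From mathcomp Require Import all_boot all_fingroup.
Set Implicit Arguments. Unset Strict Implicit. Unset Printing Implicit Defensive.

(* The permutations whose j-th coordinate function depends on x_j alone form a
   subgroup, proper when |A| >= 2 and n >= 2.  Hence a generating set contains,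
   for every j, a member changing the j-th coordinate; as an instruction changes
   at most one coordinate, n generating instructions are matched bijectively
   with the coordinates.  Were one of them unary at j, all the others would
   leave coordinate j fixed, so the whole set would lie in the subgroup for j. *)

Section Coordinates.
Variables (A : finType) (n : nat).
Local Notation W := (word A n).

Definition moves_coord (g : {perm W}) (i : 'I_n) := [exists x, g x i != x i].

Lemma coord_trivialP (g : {perm W}) i : reflect (coord_trivial g i) (~~ moves_coord g i).
Proof.
apply: (iffP negP) => [nmov x | triv /existsP[x]]; last by rewrite triv eqxx.
by apply/eqP/negPn/negP => mov; apply: nmov; apply/existsP; exists x.
Qed.

Lemma instruction_trivial_off (g : {perm W}) i k :
  instruction g -> moves_coord g i -> k != i -> coord_trivial g k.
Proof.
case=> j triv /coord_trivialP movi ki.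
have ij : i = j by apply/eqP/negPn/negP => /triv.
by apply: triv; rewrite -ij.
Qed.

Definition coord_unary (j : 'I_n) : {set {perm W}} :=
  [set g : {perm W} | [exists phi : {ffun A -> A}, [forall x, g x j == phi (x j)]]].

Lemma coord_unary_group j : group_set (coord_unary j).
Proof.
apply/group_setP; split.
  by rewrite inE; apply/existsP; exists [ffun a => a]; apply/forallP=> x; rewrite perm1 ffunE.
move=> g h; rewrite !inE => /existsP[phi /forallP gphi] /existsP[psi /forallP hpsi].
apply/existsP; exists [ffun a => psi (phi a)]; apply/forallP=> x.
by rewrite permM ffunE (eqP (hpsi _)) (eqP (gphi _)).
Qed.

Canonical coord_unary_groupType j := Group (coord_unary_group j).

Lemma coord_trivial_unary (g : {perm W}) j : coord_trivial g j -> g \in coord_unary j.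
Proof.
by move=> triv; rewrite inE; apply/existsP; exists [ffun a => a]; apply/forallP=> x; rewrite ffunE triv.
Qed.

Section UnaryAt.
Variables (f : {perm W}) (j : 'I_n) (h : {perm A}).
Hypothesis fE : forall x : W, f x = [ffun i => if i == j then h (x j) else x i].

Lemma unary_coord_trivial_off k : k != j -> coord_trivial f k.
Proof. by move=> kj x; rewrite fE ffunE (negbTE kj). Qed.

Lemma unary_coord_unary : f \in coord_unary j.
Proof.
by rewrite inE; apply/existsP; exists [ffun a => h a]; apply/forallP => x; rewrite fE !ffunE eqxx.
Qed.

End UnaryAt.

Lemma coord_unary_proper j : 1 < #|A| -> 1 < n -> exists g : {perm W}, g \notin coord_unary j.
Proof.
case/card_gt1P=> a [b [_ _ ab]] n_gt1.
have [k kj] : exists k : 'I_n, k != j.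
  have [k0 | k1] := eqVneq j (Ordinal (ltnW n_gt1)).
    by exists (Ordinal n_gt1); rewrite k0 -val_eqE.
  by exists (Ordinal (ltnW n_gt1)); rewrite eq_sym.
(* The transposition of [b at k] and [b at j] fixes the constant word a, so the
   image of the j-th coordinate a would have to be both a and b. *)
pose x : W := [ffun _ => a].
pose y : W := [ffun i => if i == k then b else a].
pose z : W := [ffun i => if i == j then b else a].
have xy : x != y by apply/eqP => /(congr1 (fun w : W => w k)); rewrite !ffunE eqxx; apply/eqP.
have xz : x != z by apply/eqP => /(congr1 (fun w : W => w j)); rewrite !ffunE eqxx; apply/eqP.
exists (tperm y z); rewrite inE; apply/existsP => -[phi /forallP phiP].
move: (phiP x) (phiP y); rewrite tpermL tpermD 1?eq_sym //.
rewrite !ffunE eqxx (eq_sym j k) (negbTE kj) => /eqP phia /eqP phib.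
by rewrite phib phia eqxx in ab.
Qed.

Lemma generating_not_sub_coord_unary (X : {set {perm W}}) j :
  1 < #|A| -> 1 < n -> <<X>>%g = [set: {perm W}] -> ~ X \subset coord_unary j.
Proof.
move=> A_gt1 n_gt1 genX sub_j; have [g] := coord_unary_proper j A_gt1 n_gt1.
have /subsetP : <<X>>%g \subset coord_unary_groupType j by rewrite gen_subG.
by rewrite genX => /(_ g); rewrite inE => ->.
Qed.

Lemma generating_moves_coord (X : {set {perm W}}) i :
  1 < #|A| -> 1 < n -> <<X>>%g = [set: {perm W}] ->
  exists2 g, g \in X & moves_coord g i.
Proof.
move=> A_gt1 n_gt1 genX; apply/exists_inP/negP => /exists_inP nmov.
apply: (generating_not_sub_coord_unary (j := i) A_gt1 n_gt1 genX); apply/subsetP => g gX.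
by apply/coord_trivial_unary/coord_trivialP/negP => mov; apply: nmov; exists g.
Qed.

Lemma instructions_moving_all_coords (X : {set {perm W}}) :
  #|X| = n -> (forall g, g \in X -> instruction g) ->
  (forall i, exists2 g, g \in X & moves_coord g i) ->
  exists G : 'I_n -> {perm W}, X = [set G i | i : 'I_n] /\ forall i, moves_coord (G i) i.
Proof.
move=> cardX instrX movX.
pose G i := odflt 1%g [pick g in X | moves_coord g i].
have GP i : G i \in X /\ moves_coord (G i) i.
  rewrite /G; case: pickP => [g /andP[] // | none] /=.
  by case: (movX i) => g gX movg; move: (none g); rewrite gX movg.
have G_inj : injective G.
  move=> i k Gik; have [_ movi] := GP i; have [Xk movk] := GP k.
  apply/eqP/negPn/negP => ik; move: movi; rewrite Gik.
  by move/coord_trivialP: (instruction_trivial_off (instrX _ Xk) movk ik) => /negPf ->.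
exists G; split=> [|i]; last by case: (GP i).
apply/eqP; rewrite eq_sym eqEcard card_imset // card_ord cardX leqnn andbT.
by apply/subsetP => _ /imsetP[i _ ->]; case: (GP i).
Qed.

End Coordinates.

Theorem lemma6 (A : finType) (n : nat) (X : {set {perm {ffun 'I_n -> A}}}) :
  1 < #|A| -> 1 < n ->
  #|X| = n ->
  (forall f, f \in X -> instruction f) ->
  <<X>>%g = [set: {perm {ffun 'I_n -> A}}] ->
  forall f, f \in X -> ~ unary_instruction f.
Proof.
move=> A_gt1 n_gt1 cardX instrX genX f fX [j [h fE]].
have [G [XG movG]] := instructions_moving_all_coords cardX instrX
  (fun i => generating_moves_coord i A_gt1 n_gt1 genX).
have fGj : f = G j.
  move: fX; rewrite XG => /imsetP[k _ fk]; rewrite fk.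
  suff -> : k = j by [].
  apply/eqP/negPn/negP => /(unary_coord_trivial_off fE)/coord_trivialP.
  by rewrite fk movG.
apply: (generating_not_sub_coord_unary (j := j) A_gt1 n_gt1 genX).
rewrite XG; apply/subsetP => _ /imsetP[i _ ->].
have [-> | ij] := eqVneq i j; first by rewrite -fGj (unary_coord_unary fE).
have GiX : G i \in X by rewrite XG imset_f.
apply/coord_trivial_unary/(instruction_trivial_off (instrX _ GiX) (movG i)).
by rewrite eq_sym.
Qed.
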